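(* Let $G$ be a countable directed graph and let $x_1\neq x_2$ be vertices of $G$. (a) If $\pi$ is any two-dimensional nest representation of $\mathcal{T}_+(G)$ with $\rho^{(1)}_\pi\in\mathfrak{M}_{G,x_1}$ and $\rho^{(2)}_\pi\in\mathfrak{M}_{G,x_2}$, then there is an edge $e\in\mathcal{E}(G)$ with $s(e)=x_1$ and $r(e)=x_2$. (b) Consequently, $\operatorname{rep}_{x_1,x_2}(\mathcal{T}_+(G))\neq\emptyset$ if and only if there exists an edge $e\in\mathcal{E}(G)$ with $s(e)=x_1$ and $r(e)=x_2$.
   Context: A countable directed graph $G$ has countable vertex set $\mathcal{V}(G)$, edge set $\mathcal{E}(G)$, range and source maps $r,s$. The free semigroupoid $\mathbb{F}^+(G)$ consists of vertices (paths of length $0$) and finite paths $w=e_k\cdots e_1$ with $s(e_i)=r(e_{i-1})$, $s(w)=s(e_1)$, $r(w)=r(e_k)$. On $\ell^2(\mathbb{F}^+(G))$ with orthonormal basis $\{\xi_w\}$, $L_e\xi_w=\xi_{ew}$ if $s(e)=r(w)$ and $0$ otherwise, and $P_v$ is the projection onto $\overline{\operatorname{span}}\{\xi_w:r(w)=v\}$. The tensor algebra $\mathcal{T}_+(G)$ is the norm-closed operator algebra generated by all $L_e$ and $P_v$. $\mathfrak{M}_G$ is the set of characters of $\mathcal{T}_+(G)$ and $\mathfrak{M}_{G,x}=\{\rho\in\mathfrak{M}_G:\rho(P_x)=1\}$. A two-dimensional nest representation is a continuous algebra homomorphism $\pi$ of $\mathcal{T}_+(G)$ onto $\operatorname{Alg}\mathcal{N}$,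 where $\mathcal{H}$ is a 2-dimensional Hilbert space, $\mathcal{N}=\{0,N,I\}$ with $N$ a one-dimensional subspace, and $\operatorname{Alg}\mathcal{N}$ is the algebra of all operators on $\mathcal{H}$ leaving $N$ invariant. Choosing unit vectors $h_2\in N$ and $h_1\in N^\perp$, set $\rho^{(i)}_\pi(A)=\langle\pi(A)h_i,h_i\rangle$, $i=1,2$ (these are characters). For $x_1\neq x_2$, $\operatorname{rep}_{x_1,x_2}(\mathcal{T}_+(G))$ is the set of two-dimensional nest representations $\pi$ with $\rho^{(i)}_\pi\in\mathfrak{M}_{G,x_i}$ for $i=1,2$. *)

From HB Require Import structures.
From mathcomp Require Import all_boot all_order all_algebra.
From mathcomp Require Import complex.
From mathcomp Require Import boolp classical_sets reals constructive_ereal ereal esum.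

Set Implicit Arguments.
Unset Strict Implicit.
Unset Printing Implicit Defensive.

Import Order.TTheory GRing.Theory Num.Theory.
Local Open Scope ring_scope.

Section GraphAlgebra.
Variables (R : realType) (V E : countType) (r s : E -> V).

Local Notation C := R[i].

(* Indices: a pair (v, [:: e_k; ...; e_1]).  The range of the path is v. *)
Definition idx := (V * seq E)%type.

Definition valid_path (p : idx) : bool :=
  match p.2 with
  | [::] => true
  | e :: t => (r e == p.1) && path (fun a b => s a == r b) e t
  end.

Definition vec := idx -> C.

Definition sqmod (z : C) : R := (@complex.Re R z) ^+ 2 + (@complex.Im R z) ^+ 2.

Definition nrm2 (f : vec) : \bar R := \esum_(p in [set: idx]) (sqmod (f p))%:E.

(* l^2(F^+(G)): square summable functions supported on the paths *)
Definition l2 (f : vec) : Prop :=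
  (forall p, ~~ valid_path p -> f p = 0) /\ (nrm2 f < +oo)%E.

(* operators (only their action on l2 is meaningful) *)
Definition Op := vec -> vec.

Definition opadd (A B : Op) : Op := fun f p => A f p + B f p.
Definition opsub (A B : Op) : Op := fun f p => A f p - B f p.
Definition opscale (a : C) (A : Op) : Op := fun f p => a * A f p.
Definition opcomp (A B : Op) : Op := fun f => A (B f).

Definition opnorm_le (A : Op) (c : R) : Prop :=
  0 <= c /\ forall f, l2 f -> (nrm2 (A f) <= (c ^+ 2)%:E * nrm2 f)%E.

Definition is_op (A : Op) : Prop :=
  [/\ (forall f, l2 f -> l2 (A f)),
      (forall (a : C) f g, l2 f -> l2 g ->
          A (fun p => a * f p + g p) = (fun p => a * A f p + A g p))
    & exists c, opnorm_le A c].

(* L_e xi_w = xi_{ew} if s(e) = r(w), 0 otherwise *)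
Definition Lop (e : E) : Op := fun f p =>
  if valid_path p then
    match p.2 with
    | e' :: t => if e' == e then f (s e, t) else 0
    | [::] => 0
    end
  else 0.

Definition Pop (v : V) : Op := fun f p => if p.1 == v then f p else 0.

Inductive alg0 : Op -> Prop :=
  | alg0_L e : alg0 (Lop e)
  | alg0_P v : alg0 (Pop v)
  | alg0_add A B : alg0 A -> alg0 B -> alg0 (opadd A B)
  | alg0_scale a A : alg0 A -> alg0 (opscale a A)
  | alg0_comp A B : alg0 A -> alg0 B -> alg0 (opcomp A B).

Definition tensor_alg (A : Op) : Prop :=
  is_op A /\ forall eps : R, 0 < eps ->
    exists B, alg0 B /\ exists c, c < eps /\ opnorm_le (opsub A B) c.

Definition character (rho : Op -> C) : Prop :=
  [/\ (forall A B, tensor_alg A -> tensor_alg B -> rho (opadd A B) = rho A + rho B),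
      (forall a A, tensor_alg A -> rho (opscale a A) = a * rho A),
      (forall A B, tensor_alg A -> tensor_alg B -> rho (opcomp A B) = rho A * rho B)
    & exists A, tensor_alg A /\ rho A != 0].

Definition char_at (x : V) (rho : Op -> C) : Prop :=
  character rho /\ rho (Pop x) = 1.

Definition inner (u v : 'cV[C]_2) : C := \sum_(i < 2) u i ord0 * conjc (v i ord0).
Definition unit_vec (h : 'cV[C]_2) : Prop := inner h h = 1.

Definition AlgN (h2 : 'cV[C]_2) (T : 'M[C]_2) : Prop :=
  exists c : C, T *m h2 = c *: h2.

Definition nest_rep (pi : Op -> 'M[C]_2) (h2 : 'cV[C]_2) : Prop :=
  [/\ (forall A B, tensor_alg A -> tensor_alg B -> pi (opadd A B) = pi A + pi B),
      (forall a A, tensor_alg A -> pi (opscale a A) = a *: pi A) &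
   [/\
      (forall A B, tensor_alg A -> tensor_alg B -> pi (opcomp A B) = pi A *m pi B),
      (forall A, tensor_alg A -> forall eps : R, 0 < eps -> exists2 delta : R, 0 < delta &
         forall B, tensor_alg B -> (exists c, c < delta /\ opnorm_le (opsub A B) c) ->
         forall i j, sqmod (pi A i j - pi B i j) < eps),
      (forall A, tensor_alg A -> AlgN h2 (pi A))
    &
      (forall M, AlgN h2 M -> exists A, tensor_alg A /\ pi A = M)]].

Definition rho_pi (pi : Op -> 'M[C]_2) (h : 'cV[C]_2) : Op -> C :=
  fun A => inner (pi A *m h) h.

Definition in_rep (x1 x2 : V) (pi : Op -> 'M[C]_2) (h1 h2 : 'cV[C]_2) : Prop :=
  [/\ unit_vec h1, unit_vec h2, inner h1 h2 = 0 &
   [/\ nest_rep pi h2, char_at x1 (rho_pi pi h1) & char_at x2 (rho_pi pi h2)]].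

End GraphAlgebra.

From HB Require Import structures.
From mathcomp Require Import all_boot all_order all_algebra.
From mathcomp Require Import complex.
From mathcomp Require Import boolp classical_sets reals constructive_ereal ereal esum.
From mathcomp Require Import ring lra fsbigop cardinality.

Set Implicit Arguments.
Unset Strict Implicit.
Unset Printing Implicit Defensive.

Import Order.TTheory GRing.Theory Num.Theory.
Local Open Scope ring_scope.
Local Open Scope complex_scope.

(* If no edge runs from x1 to x2, write the nest representation [pi] in an
   orthonormal basis (h1, h2) with h2 spanning the invariant line.  The result
   [S] is multiplicative and lower triangular, with the characters rho1, rho2 on
   its diagonal.  As rho_i(P_{x_i}) = 1 and P_{x1} P_{x2} = 0, the matrices
   Q_i = S(P_{x_i}) satisfy Q1 + Q2 = 1.  Now P_{x2} g P_{x1} = 0 for every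
   generator g, and inserting Q1 + Q2 between two factors shows Q2 S(B) Q1 = 0
   for every polynomial B in the generators, hence, by continuity, for every B
   in T_+(G).  But S is onto the lower triangular matrices, and Q2 E21 Q1 <> 0.

   Conversely, for an edge e from x1 to x2 the orthogonal complement of
   K = span(xi_{x1}, xi_e) is invariant under T_+(G), so compression to K is a
   homomorphism, and P_{x1}, P_{x2}, L_e compress to the three matrix units of
   the nest algebra of span(xi_e) in K. *)

Section ComplexModulus.
Variable R : realType.
Implicit Types (z w : R[i]) (c : R).

Lemma sqmod_ge0 z : 0 <= sqmod z.
Proof. by case: z => a b; rewrite /sqmod /=; nra. Qed.

Lemma sqmod0 : sqmod (0 : R[i]) = 0.
Proof. by rewrite /sqmod /=; ring. Qed.

Lemma sqmod1 : sqmod (1 : R[i]) = 1.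
Proof. by rewrite /sqmod /=; ring. Qed.

Lemma sqmodM z w : sqmod (z * w) = sqmod z * sqmod w.
Proof. by case: z => a b; case: w => c d; rewrite /sqmod /=; ring. Qed.

Lemma sqmodD_le z w : sqmod (z + w) <= 2 * sqmod z + 2 * sqmod w.
Proof.
case: z => a b; case: w => c d; rewrite /sqmod /=.
by have := sqr_ge0 (a - c); have := sqr_ge0 (b - d); nra.
Qed.

Lemma sqmod_sum_le n (F : 'I_n -> R[i]) :
  sqmod (\sum_(k < n) F k) <= 2 ^+ n * \sum_(k < n) sqmod (F k).
Proof.
elim: n F => [|n IHn] F; first by rewrite !big_ord0 sqmod0 mulr0.
rewrite !big_ord_recl exprS; apply: le_trans (sqmodD_le _ _) _.
have F0 := sqmod_ge0 (F ord0); have tn : 1 <= 2 ^+ n :> R by rewrite exprn_ege1 // ler1n.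
have := IHn (fun k => F (lift ord0 k)); nra.
Qed.

Lemma sqmod_eq0_small z c : (forall e, 0 < e -> sqmod z <= c * e) -> z = 0.
Proof.
move=> small; have z0 := sqmod_ge0 z.
have {}z0 : sqmod z = 0.
  apply/eqP; rewrite eq_le z0 andbT leNgt; apply/negP => zpos.
  have c0 : 0 < c by have := small 1 ltr01; lra.
  have half : c * (sqmod z / (2 * c)) = sqmod z / 2 by field; rewrite gt_eqF.
  have := small (sqmod z / (2 * c)); rewrite divr_gt0 ?mulr_gt0 // half => /(_ isT).
  lra.
by move: z0 {small}; case: z => a b; rewrite /sqmod /= => ab0; congr (_ +i* _); nra.
Qed.

End ComplexModulus.

Section NonnegativeSums.
Variables (R : realType) (T : choiceType).
Implicit Types (a : T -> \bar R) (S : set T).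

Lemma esum_ge_term a t : (forall x, 0 <= a x)%E -> (a t <= \esum_(i in [set: T]) a i)%E.
Proof.
move=> a0; apply: esum_ge; exists [set t]%classic; first by split => //; exact: finite_set1.
by rewrite fsbig_set1.
Qed.

Lemma esum_le_setT a S : (forall x, 0 <= a x)%E ->
  (\esum_(i in S) a i <= \esum_(i in [set: T]) a i)%E.
Proof. by move=> a0; rewrite esum_mkcond; apply: le_esum => i _; case: ifP. Qed.

Lemma esumZl_le a S (c : R) : 0 <= c -> (forall x, 0 <= a x)%E ->
  (\esum_(i in S) (c%:E * a i) <= c%:E * \esum_(i in S) a i)%E.
Proof.
move=> c0 a0; rewrite ge_ereal_sup => //= _ [X [finX XS]] <-.
rewrite -ge0_mule_fsumr //; apply: lee_wpmul2l; first by rewrite lee_fin.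
by apply: esum_ge; exists X.
Qed.

End NonnegativeSums.

Section SquareSummable.
Variables (R : realType) (V E : countType) (r s : E -> V).
Implicit Types (f g : vec R V E).

Lemma nrm2_ge0 f : (0 <= nrm2 f)%E.
Proof. by apply: esum_ge0 => p _; rewrite lee_fin sqmod_ge0. Qed.

Lemma nrm2_ge_coord f w : ((sqmod (f w))%:E <= nrm2 f)%E.
Proof.
rewrite /nrm2; apply: (esum_ge_term (a := fun p => (sqmod (f p))%:E)) => p.
by rewrite lee_fin sqmod_ge0.
Qed.

Lemma nrm2_eq0 f : f =1 (fun _ => 0) -> nrm2 f = 0%E.
Proof. by move=> f0; apply: esum1 => p _; rewrite f0 sqmod0. Qed.

Lemma l2_nrm2E f : l2 r s f -> nrm2 f = (fine (nrm2 f))%:E /\ 0 <= fine (nrm2 f).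
Proof.
move=> [_ fin]; have nf : nrm2 f = (fine (nrm2 f))%:E.
  by rewrite fineK // ge0_fin_numE // nrm2_ge0.
by split=> //; rewrite -lee_fin -nf nrm2_ge0.
Qed.

Lemma nrm2_lincomb_le (a : R[i]) f g :
  (nrm2 (fun p => (a * f p + g p)%R) <= (2 * sqmod a)%:E * nrm2 f + 2%:E * nrm2 g)%E.
Proof.
have k0 : 0 <= 2 * sqmod a by rewrite mulr_ge0 ?sqmod_ge0.
apply: (@le_trans _ _ (\esum_(p in [set: idx V E])
   ((2 * sqmod a)%:E * (sqmod (f p))%:E + 2%:E * (sqmod (g p))%:E))%E).
  apply: le_esum => p _; rewrite -!EFinM -EFinD lee_fin.
  by apply: le_trans (sqmodD_le _ _) _; rewrite sqmodM mulrA.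
rewrite esumD; last 2 first.
- by move=> p _; rewrite -EFinM lee_fin mulr_ge0 ?sqmod_ge0.
- by move=> p _; rewrite -EFinM lee_fin mulr_ge0 ?sqmod_ge0.
by apply: leeD; apply: esumZl_le => // p; rewrite lee_fin sqmod_ge0.
Qed.

Lemma l2_lincomb (a : R[i]) f g : l2 r s f -> l2 r s g -> l2 r s (fun p => a * f p + g p).
Proof.
move=> lf lg; split=> [p p_invalid|].
  by rewrite lf.1 // lg.1 // mulr0 addr0.
apply: le_lt_trans (nrm2_lincomb_le _ _ _) _.
by rewrite (l2_nrm2E lf).1 (l2_nrm2E lg).1 -!EFinM -EFinD ltry.
Qed.

Lemma l2_0 : l2 r s (fun _ => 0 : R[i]).
Proof. by split=> //; rewrite nrm2_eq0 ?ltry. Qed.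

Definition xi (w : idx V E) : vec R V E := fun p => (p == w)%:R.

Lemma nrm2_xi w : nrm2 (xi w) = 1%E.
Proof.
rewrite /nrm2 (eq_esum (b := fun p => if p \in [set w]%classic
                                       then (sqmod (xi w p))%:E else 0%E)).
  by rewrite -esum_mkcond esum_set1 /xi eqxx ?sqmod1 // lee_fin sqmod_ge0.
move=> p _; rewrite /xi; case: eqVneq => [->|]; first by rewrite mem_set.
by rewrite sqmod0; case: ifP.
Qed.

Lemma l2_xi w : valid_path r s w -> l2 r s (xi w).
Proof.
move=> w_valid; split; last by rewrite nrm2_xi ltry.
by move=> p; rewrite /xi; case: eqVneq => // ->; rewrite w_valid.
Qed.

End SquareSummable.

Section BoundedOperators.
Variables (R : realType) (V E : countType) (r s : E -> V).
Implicit Types (f g : vec R V E) (A B : Op R V E).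

Lemma opnorm_le_of_nrm2 A (k : R) : 0 <= k ->
  (forall f, l2 r s f -> (nrm2 (A f) <= k%:E * nrm2 f)%E) -> opnorm_le r s A (1 + k).
Proof.
move=> k0 bound; split=> [|f lf]; first lra.
apply: le_trans (bound f lf) _; apply: lee_wpmul2r; first exact: nrm2_ge0.
by rewrite lee_fin; nra.
Qed.

Lemma nrm2_Pop_le v f : (nrm2 (Pop v f) <= nrm2 f)%E.
Proof.
apply: le_esum => p _; rewrite /Pop; case: ifP => // _.
by rewrite sqmod0 lee_fin sqmod_ge0.
Qed.

(* [Lop e] is an isometry from the paths with range [s e] onto the paths
   starting with [e]; it vanishes elsewhere. *)
Lemma nrm2_Lop_le e f : (nrm2 (Lop r s e f) <= nrm2 f)%E.
Proof.
pose cons_e (q : idx V E) := (r e, e :: q.2).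
pose from_se := [set q : idx V E | q.1 = s e]%classic.
have -> : nrm2 (Lop r s e f) = \esum_(p in cons_e @` from_se) (sqmod (Lop r s e f p))%:E.
  rewrite /nrm2 [RHS]esum_mkcond; apply: eq_esum => -[v [|e' t]] _ /=.
    by rewrite /Lop /= ?if_same sqmod0 if_same.
  case: ifPn => // not_image; rewrite /Lop /=.
  case: ifP => [/andP[/eqP rv _]|_]; last by rewrite sqmod0.
  case: eqVneq => [ee|]; last by rewrite sqmod0.
  by case/negP: not_image; apply/mem_set; exists (s e, t); rewrite // /cons_e /= -ee rv.
rewrite esum_image; last first.
  move=> [a1 b1] [a2 b2] /set_mem h1 /set_mem h2 [eb].
  by rewrite /from_se /= in h1 h2; rewrite h1 h2 eb.
apply: le_trans (esum_le_setT _ _); last by move=> p; rewrite lee_fin sqmod_ge0.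
apply: le_esum => -[q1 q2]; rewrite /from_se /= => ->.
rewrite /Lop /= !eqxx /=; case: ifP => _ //.
by rewrite sqmod0 lee_fin sqmod_ge0.
Qed.

Lemma is_op_Pop v : is_op r s (Pop (R := R) (E := E) v).
Proof.
split.
- move=> f lf; split; last exact: le_lt_trans (nrm2_Pop_le _ _) lf.2.
  by move=> p p_invalid; rewrite /Pop; case: ifP => // _; apply: lf.1.
- by move=> a f g _ _; apply/funext => p; rewrite /Pop; case: ifP; rewrite ?mulr0 ?addr0.
- by exists (1 + 1); apply: opnorm_le_of_nrm2 => // f _; rewrite mul1e nrm2_Pop_le.
Qed.

Lemma is_op_Lop e : is_op r s (Lop (R := R) r s e).
Proof.
split.
- move=> f lf; split; last exact: le_lt_trans (nrm2_Lop_le _ _) lf.2.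
  by move=> p p_invalid; rewrite /Lop (negbTE p_invalid).
- move=> a f g _ _; apply/funext => p; rewrite /Lop.
  case: ifP => _; last by rewrite mulr0 addr0.
  by case: p.2 => [|e' t]; rewrite ?mulr0 ?addr0 //; case: ifP; rewrite ?mulr0 ?addr0.
- by exists (1 + 1); apply: opnorm_le_of_nrm2 => // f _; rewrite mul1e nrm2_Lop_le.
Qed.

Lemma is_op_add A B : is_op r s A -> is_op r s B -> is_op r s (opadd A B).
Proof.
move=> [lA linA [a [a0 bA]]] [lB linB [b [b0 bB]]]; split.
- move=> f lf; have := l2_lincomb 1 (lA f lf) (lB f lf).
  by rewrite /opadd; under eq_fun do rewrite mul1r.
- move=> c f g lf lg; apply/funext => p; rewrite /opadd linA // linB //.
  by rewrite mulrDr -!addrA; congr (_ + _); rewrite addrCA.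
- exists (1 + (2 * a ^+ 2 + 2 * b ^+ 2)); apply: opnorm_le_of_nrm2 => [|f lf]; first nra.
  have := nrm2_lincomb_le 1 (A f) (B f); under eq_fun do rewrite mul1r.
  rewrite sqmod1 mulr1 => /le_trans; apply.
  have := bA f lf; have := bB f lf.
  case: (l2_nrm2E (lA f lf)) => -> _; case: (l2_nrm2E (lB f lf)) => -> _.
  case: (l2_nrm2E lf) => -> nf0.
  by rewrite -!EFinM -!EFinD !lee_fin; nra.
Qed.

Lemma is_op_scale (c : R[i]) A : is_op r s A -> is_op r s (opscale c A).
Proof.
move=> [lA linA [a [a0 bA]]].
have cA f : opscale c A f = fun p => c * A f p + 0 by apply/funext => p; rewrite addr0.
split.
- by move=> f lf; rewrite cA; apply: l2_lincomb (lA f lf) (l2_0 _ _ _).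
- move=> b f g lf lg; apply/funext => p; rewrite /opscale linA //.
  by rewrite mulrDr !mulrA [c * b]mulrC.
- have c0 := sqmod_ge0 c.
  exists (1 + 2 * sqmod c * a ^+ 2); apply: opnorm_le_of_nrm2 => [|f lf]; first nra.
  rewrite cA; have := nrm2_lincomb_le c (A f) (fun _ => 0).
  rewrite (nrm2_eq0 (f := fun _ => 0)) // mule0 adde0 => /le_trans; apply.
  have := bA f lf; case: (l2_nrm2E (lA f lf)) => -> _; case: (l2_nrm2E lf) => -> nf0.
  by rewrite -!EFinM !lee_fin; nra.
Qed.

Lemma is_op_comp A B : is_op r s A -> is_op r s B -> is_op r s (opcomp A B).
Proof.
move=> [lA linA [a [a0 bA]]] [lB linB [b [b0 bB]]]; split.
- by move=> f lf; apply/lA/lB.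
- by move=> c f g lf lg; rewrite /opcomp linB // linA //; apply: lB.
- exists (1 + a ^+ 2 * b ^+ 2); apply: opnorm_le_of_nrm2 => [|f lf]; first nra.
  have := bA _ (lB f lf); have := bB f lf.
  case: (l2_nrm2E (lA _ (lB f lf))) => -> _; case: (l2_nrm2E (lB f lf)) => -> _.
  case: (l2_nrm2E lf) => -> nf0.
  rewrite -!EFinM !lee_fin => BfB /le_trans; apply.
  by have := ler_wpM2l (sqr_ge0 a) BfB; rewrite mulrA.
Qed.

Lemma alg0_is_op A : alg0 r s A -> is_op r s A.
Proof.
elim=> {A} [e|v|A B _ ? _ ?|c A _ ?|A B _ ? _ ?].
- exact: is_op_Lop.
- exact: is_op_Pop.
- exact: is_op_add.
- exact: is_op_scale.
- exact: is_op_comp.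
Qed.

Lemma alg0_tensor_alg A : alg0 r s A -> tensor_alg r s A.
Proof.
move=> A_alg0; split=> [|eps eps0]; first exact: alg0_is_op.
exists A; split=> //; exists 0; split=> //; split=> // f _.
by rewrite nrm2_eq0 => [|p]; rewrite /opsub ?subrr // expr0n mul0e.
Qed.

Lemma tensor_alg_Pop v : tensor_alg r s (Pop (R := R) (E := E) v).
Proof. by apply: alg0_tensor_alg; constructor. Qed.

End BoundedOperators.

Section Approximation.
Variables (R : realType) (V E : countType) (r s : E -> V).
Implicit Types (f : vec R V E) (A B : Op R V E).

Lemma tensor_alg_coord_eq0 A f w : tensor_alg r s A -> l2 r s f ->
  (forall B, alg0 r s B -> B f w = 0) -> A f w = 0.
Proof.
move=> [_ approx] lf alg0_eq0; have [nfE nf0] := l2_nrm2E lf.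
apply: (sqmod_eq0_small (c := fine (nrm2 f))) => e e0.
have := approx (Num.min 1 e); rewrite lt_min ltr01 e0.
move=> /(_ isT) [B [B_alg0 [c [ce [c0 bound]]]]].
have : sqmod (opsub A B f w) <= c ^+ 2 * fine (nrm2 f).
  by rewrite -lee_fin EFinM -nfE; apply: le_trans (nrm2_ge_coord _ _) (bound f lf).
rewrite /opsub (alg0_eq0 B) // subr0 mulrC => /le_trans; apply; apply: ler_wpM2l => //.
by move: ce; rewrite lt_min => /andP[c1 ce]; nra.
Qed.

Definition zero_on (W : pred (idx V E)) f := forall w, W w -> f w = 0.

Section InvariantCoordinateSubspace.
Variable W : pred (idx V E).
Hypothesis Lop_zero_on : forall e f, zero_on W f -> zero_on W (Lop r s e f).

Lemma alg0_zero_on B f : alg0 r s B -> zero_on W f -> zero_on W (B f).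
Proof.
move=> B_alg0; elim: B_alg0 f => {B} [e|v|A B _ IHA _ IHB|c A _ IHA|A B _ IHA _ IHB] f f0 w Ww.
- exact: Lop_zero_on.
- by rewrite /Pop; case: ifP => // _; apply: f0.
- by rewrite /opadd IHA // IHB // addr0.
- by rewrite /opscale IHA // mulr0.
- by apply: IHA => //; apply: IHB.
Qed.

Lemma tensor_alg_zero_on A f : tensor_alg r s A -> l2 r s f -> zero_on W f -> zero_on W (A f).
Proof.
move=> A_tensor lf f0 w Ww; apply: tensor_alg_coord_eq0 => // B B_alg0.
exact: alg0_zero_on.
Qed.

End InvariantCoordinateSubspace.

Definition op0 : Op R V E := fun _ _ => 0.

Lemma opscale0 A : opscale 0 A = op0.
Proof. by apply/funext => f; apply/funext => p; rewrite /opscale mul0r. Qed.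

Lemma opcomp_Pop_neq v w : v != w -> opcomp (Pop v) (Pop w) = op0.
Proof.
move=> vw; apply/funext => f; apply/funext => p; rewrite /opcomp /Pop.
by case: eqP => // ->; rewrite (negbTE vw).
Qed.

Lemma corner_Pop u v w : v != w -> opcomp (opcomp (Pop w) (Pop u)) (Pop v) = op0.
Proof.
move=> vw; apply/funext => f; apply/funext => p; rewrite /opcomp /Pop.
case: eqP => // pw; case: ifP => // _; case: eqP => // pv.
by move: vw; rewrite -pv -pw eqxx.
Qed.

Lemma corner_Lop e v w : ~ (s e = v /\ r e = w) ->
  opcomp (opcomp (Pop w) (Lop r s e)) (Pop v) = op0.
Proof.
move=> no_edge; apply/funext => f; apply/funext => -[u [|e' t]]; rewrite /opcomp /Pop /Lop /=.
  by rewrite !if_same.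
case: eqVneq => // -> {u}; case: ifP => // /andP[/eqP /= re' _].
case: eqVneq => // ee'; case: eqVneq => // se.
by exfalso; apply: no_edge; rewrite -re' ee'.
Qed.

End Approximation.

Arguments op0 {R V E}.

Lemma ord2P (i : 'I_2) : i = ord0 \/ i = ord_max.
Proof. by case: i => -[|[|//]] i2; [left | right]; apply: val_inj. Qed.

Lemma big_ord2 (T : nmodType) (F : 'I_2 -> T) : \sum_(i < 2) F i = F ord0 + F ord_max.
Proof. by rewrite big_ord_recr big_ord1; congr (F _ + F _); apply: val_inj. Qed.

Lemma lower_mx2_complement (F : nzRingType) (Q1 Q2 : 'M[F]_2) :
  Q1 ord0 ord_max = 0 -> Q2 ord0 ord_max = 0 -> Q1 ord0 ord0 = 1 -> Q2 ord_max ord_max = 1 ->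
  Q1 *m Q2 = 0 -> Q2 *m Q1 = 0 -> Q1 + Q2 = 1%:M.
Proof.
move=> Q1_01 Q2_01 Q1_00 Q2_11 Q12 Q21.
have entry (X Y : 'M[F]_2) i j : X *m Y = 0 -> \sum_k X i k * Y k j = 0.
  by move=> XY; have := congr1 (fun M : 'M_2 => M i j) XY; rewrite /= !mxE.
have := entry _ _ ord_max ord_max Q12; have := entry _ _ ord0 ord0 Q21.
have := entry _ _ ord_max ord0 Q21; rewrite !big_ord2 Q2_01 Q1_00 Q2_11.
rewrite !mul0r !mulr0 !mulr1 !mul1r addr0 add0r => Q_10 Q2_00 Q1_11.
apply/matrixP => i j; rewrite !mxE.
case: (ord2P i) => ->; case: (ord2P j) => -> /=.
- by rewrite Q1_00 Q2_00 addr0.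
- by rewrite Q1_01 Q2_01 addr0.
- by rewrite addrC.
- by rewrite Q1_11 Q2_11 add0r.
Qed.

Lemma corner_mul_eq0 (F : nzRingType) n (Q1 Q2 X Y : 'M[F]_n) :
  Q1 + Q2 = 1%:M -> Q2 *m X *m Q1 = 0 -> Q2 *m Y *m Q1 = 0 -> Q2 *m (X *m Y) *m Q1 = 0.
Proof.
move=> Q12 XQ YQ; rewrite -[X]mulmx1 -Q12 mulmxDr mulmxDl mulmxDr mulmxDl.
rewrite !mulmxA XQ !mul0mx add0r -!mulmxA (mulmxA Q2 Y).
by rewrite YQ !mulmx0.
Qed.

Lemma mul_delta10_neq0 (F : nzRingType) (Q1 Q2 : 'M[F]_2) :
  Q2 ord_max ord_max = 1 -> Q1 ord0 ord0 = 1 -> Q2 *m delta_mx ord_max ord0 *m Q1 != 0.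
Proof.
move=> Q2_11 Q1_00; apply/negP => /eqP/matrixP/(_ ord_max ord0).
rewrite !mxE !big_ord2 !mxE !big_ord2 !mxE /= Q2_11 Q1_00.
by rewrite !mulr0 !mulr1 !add0r mul0r addr0; apply/eqP; rewrite oner_eq0.
Qed.

Lemma sqmod_mulmx_entry_le (R : realType) m n p q
    (K1 : 'M[R[i]]_(m, n)) (K2 : 'M_(p, q)) i j :
  exists c : R, forall (D : 'M_(n, p)) d, (forall k l, sqmod (D k l) <= d) ->
    sqmod ((K1 *m D *m K2) i j) <= c * d.
Proof.
exists (2 ^+ p * 2 ^+ n * \sum_(l < p) \sum_(k < n) sqmod (K1 i k) * sqmod (K2 l j)).
move=> D d Dd; rewrite !mxE; apply: le_trans (sqmod_sum_le _) _.
rewrite -!mulrA ler_wpM2l ?exprn_ge0 // mulr_suml mulr_sumr; apply: ler_sum => l _.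
rewrite sqmodM mxE; apply: le_trans (ler_wpM2r (sqmod_ge0 _) (sqmod_sum_le _)) _.
rewrite -mulrA ler_wpM2l ?exprn_ge0 // !mulr_suml; apply: ler_sum => k _.
by rewrite sqmodM mulrAC ler_wpM2l ?mulr_ge0 ?sqmod_ge0.
Qed.

Section InnerProduct.
Variable R : realType.
Implicit Types (u v : 'cV[R[i]]_2) (X H : 'M[R[i]]_2).

Lemma inner_delta_r u k : inner u (delta_mx k ord0) = u k ord0.
Proof.
rewrite /inner (bigD1 k) //= big1 => [|l /negbTE lk]; last by rewrite mxE lk conjc0 mulr0.
by rewrite mxE !eqxx conjc1 mulr1 addr0.
Qed.

Lemma inner_delta k l : inner (delta_mx k ord0) (delta_mx l ord0) = (k == l)%:R :> R[i].
Proof. by rewrite inner_delta_r mxE eqxx andbT eq_sym. Qed.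

Lemma rho_pi_delta (V E : countType) (pi : Op R V E -> 'M[R[i]]_2) k A :
  rho_pi pi (delta_mx k ord0) A = pi A k k.
Proof. by rewrite /rho_pi inner_delta_r -colE mxE. Qed.

Lemma inner_conj u v : inner v u = (inner u v)^*.
Proof. by rewrite /inner rmorph_sum; apply: eq_bigr => k _; rewrite rmorphM /= conjcK mulrC. Qed.

Lemma inner_scalel c u v : inner (c *: u) v = c * inner u v.
Proof. by rewrite /inner mulr_sumr; apply: eq_bigr => k _; rewrite !mxE mulrA. Qed.

Definition cols_mx u v : 'M[R[i]]_2 :=
  \matrix_(i, j) (if j == ord0 then u i ord0 else v i ord0).

Definition adjmx H : 'M[R[i]]_2 := \matrix_(i, j) (H j i)^*.

Lemma col_cols_mx0 u v : col ord0 (cols_mx u v) = u.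
Proof. by apply/matrixP => i j; rewrite !mxE (ord1 j). Qed.

Lemma col_cols_mx1 u v : col ord_max (cols_mx u v) = v.
Proof. by apply/matrixP => i j; rewrite !mxE (ord1 j). Qed.

Lemma adjmx_mulE H X i j : (adjmx H *m X *m H) i j = inner (X *m col j H) (col i H).
Proof. by rewrite /inner !mxE !big_ord2 !mxE !big_ord2 !mxE; ring. Qed.

Lemma adjmx_cols_mx u v : unit_vec u -> unit_vec v -> inner u v = 0 ->
  adjmx (cols_mx u v) *m cols_mx u v = 1%:M.
Proof.
move=> u1 v1 uv0; apply/matrixP => i j.
have := adjmx_mulE (cols_mx u v) 1%:M i j; rewrite mulmx1 mul1mx => ->; rewrite mxE.
case: (ord2P i) => ->; case: (ord2P j) => ->; rewrite ?col_cols_mx0 ?col_cols_mx1 //=.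
by rewrite inner_conj uv0 conjc0.
Qed.

End InnerProduct.

Definition rep_continuous (R : realType) (V E : countType) (r s : E -> V)
    (pi : Op R V E -> 'M[R[i]]_2) :=
  forall A, tensor_alg r s A -> forall eps : R, 0 < eps -> exists2 delta : R, 0 < delta &
    forall B, tensor_alg r s B -> (exists c, c < delta /\ opnorm_le r s (opsub A B) c) ->
    forall i j, sqmod (pi A i j - pi B i j) < eps.

Lemma rep_continuous_sandwich_eq0 (R : realType) (V E : countType) (r s : E -> V)
    (pi : Op R V E -> 'M[R[i]]_2) (K1 K2 : 'M[R[i]]_2) :
  rep_continuous r s pi -> (forall B, alg0 r s B -> K1 *m pi B *m K2 = 0) ->
  forall A, tensor_alg r s A -> K1 *m pi A *m K2 = 0.
Proof.
move=> pi_cont alg0_eq0 A A_tensor; apply/matrixP => i j; rewrite [X in _ = X]mxE.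
have [c bound] := sqmod_mulmx_entry_le K1 K2 i j.
apply: (sqmod_eq0_small (c := c)) => e e0.
have [delta delta0 close] := pi_cont A A_tensor e e0.
have [B [B_alg0 [c' [c'_delta AB_norm]]]] := A_tensor.2 delta delta0.
have := bound (pi A - pi B) e; rewrite mulmxBr mulmxBl (alg0_eq0 B) // subr0; apply=> k l.
by rewrite !mxE; apply/ltW/(close B (alg0_tensor_alg B_alg0)); exists c'.
Qed.

Lemma Lop_vertex (R : realType) (V E : countType) (r s : E -> V) e (f : vec R V E) v :
  Lop r s e f (v, [::]) = 0.
Proof. by rewrite /Lop /= ?if_same. Qed.

Section Compression.
Variables (R : realType) (V E : countType) (r s : E -> V) (x1 x2 : V) (e0 : E).
Hypotheses (x12 : x1 != x2) (se0 : s e0 = x1) (re0 : r e0 = x2).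
Implicit Types (A B : Op R V E) (g : vec R V E).

Definition kpath (i : 'I_2) : idx V E := if i == ord0 then (x1, [::]) else (x2, [:: e0]).

Definition compress A : 'M[R[i]]_2 := \matrix_(i, j) A (xi R (kpath j)) (kpath i).

Lemma kpath_valid i : valid_path r s (kpath i).
Proof. by rewrite /kpath; case: ifP => _ //=; rewrite /valid_path /= re0 eqxx. Qed.

Lemma l2_xi_kpath i : l2 r s (xi R (kpath i)).
Proof. exact/l2_xi/kpath_valid. Qed.

Lemma xi_kpath i j : xi R (kpath j) (kpath i) = (i == j)%:R.
Proof.
rewrite /xi /kpath; case: (ord2P i) => ->; case: (ord2P j) => ->;
  by rewrite //= ?eqxx // xpair_eqE /= andbF.
Qed.

(* The orthogonal complement of K = span (xi x1, xi e0) is invariant; this is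
   what makes [compress] multiplicative. *)
Lemma Lop_zero_on_kpaths e g :
  zero_on (pred2 (kpath ord0) (kpath ord_max)) g ->
  zero_on (pred2 (kpath ord0) (kpath ord_max)) (Lop r s e g).
Proof.
move=> g0 w /pred2P[->|->]; first exact: Lop_vertex.
rewrite /Lop kpath_valid /=; case: eqVneq => // <-.
by rewrite se0; apply: g0; rewrite /= eqxx.
Qed.

(* The complement of [xi x1] is invariant as well, which makes the compression
   lower triangular. *)
Lemma compress_01 A : tensor_alg r s A -> compress A ord0 ord_max = 0.
Proof.
move=> A_tensor; rewrite mxE.
have Lop_zero_on e g : zero_on (pred1 (kpath ord0)) g -> zero_on (pred1 (kpath ord0)) (Lop r s e g).
  by move=> _ w /eqP ->; apply: Lop_vertex.
apply: (tensor_alg_zero_on Lop_zero_on A_tensor (l2_xi_kpath _)) => [w /eqP ->|].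
  by rewrite xi_kpath.
by rewrite /= eqxx.
Qed.

Lemma compress_expand A g i : tensor_alg r s A -> l2 r s g ->
  A g (kpath i) = \sum_k compress A i k * g (kpath k).
Proof.
move=> A_tensor lg; have [[_ linA _] _] := A_tensor; rewrite big_ord2 !mxE.
set c0 := g (kpath ord0); set c1 := g (kpath ord_max).
set d0 := xi R (kpath ord0); set d1 := xi R (kpath ord_max).
pose m p := - c0 * d0 p + (- c1 * d1 p + g p).
have lm : l2 r s m := l2_lincomb _ (l2_xi_kpath _) (l2_lincomb _ (l2_xi_kpath _) lg).
have g_decomp : g = fun p => c0 * d0 p + (c1 * d1 p + m p).
  by apply/funext => p; rewrite /m; ring.
rewrite {1}g_decomp linA; [|exact: l2_xi_kpath|exact: l2_lincomb (l2_xi_kpath _) lm].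
rewrite linA; [|exact: l2_xi_kpath|exact: lm].
have m0 : zero_on (pred2 (kpath ord0) (kpath ord_max)) m.
  by move=> w /pred2P[]->; rewrite /m /d0 /d1 !xi_kpath /c0 /c1 /=; ring.
have Am0 : A m (kpath i) = 0.
  apply: (tensor_alg_zero_on Lop_zero_on_kpaths) => //.
  by case: (ord2P i) => ->; rewrite /= eqxx ?orbT.
by rewrite Am0; ring.
Qed.

Lemma compress_mul A B : tensor_alg r s A -> tensor_alg r s B ->
  compress (opcomp A B) = compress A *m compress B.
Proof.
move=> A_tensor [[lB _ _] _]; apply/matrixP => i j; rewrite !mxE /opcomp.
rewrite compress_expand //; last exact/lB/l2_xi_kpath.
by apply: eq_bigr => k _; rewrite [compress B k j]mxE.
Qed.

Lemma compress_diag_mul A B k : tensor_alg r s A -> tensor_alg r s B ->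
  compress (opcomp A B) k k = compress A k k * compress B k k.
Proof.
move=> A_tensor B_tensor; rewrite compress_mul // mxE big_ord2.
by case: (ord2P k) => ->; rewrite compress_01 // ?mulr0 ?mul0r ?addr0 ?add0r.
Qed.

Lemma compress_continuous : rep_continuous r s compress.
Proof.
move=> A _ eps eps0; exists (Num.min 1 eps); first by rewrite lt_min ltr01 eps0.
move=> B _ [c [c_small [c0 bound]]] i j; rewrite !mxE.
have := bound _ (l2_xi_kpath j); rewrite nrm2_xi mule1.
move=> /(le_trans (nrm2_ge_coord _ (kpath i))); rewrite lee_fin /opsub => coord_le.
by move: c_small; rewrite lt_min => /andP[c1 ce]; nra.
Qed.

Lemma compress_AlgN A : tensor_alg r s A -> AlgN (delta_mx ord_max ord0) (compress A).
Proof.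
move=> A_tensor; exists (compress A ord_max ord_max).
have := compress_01 A_tensor; rewrite -colE mxE => A01.
apply/matrixP => i j; rewrite (ord1 j) !mxE.
by case: (ord2P i) => ->; rewrite /= ?mulr0 ?mulr1.
Qed.

Lemma compress_add A B : compress (opadd A B) = compress A + compress B.
Proof. by apply/matrixP => i j; rewrite !mxE. Qed.

Lemma compress_scale c A : compress (opscale c A) = c *: compress A.
Proof. by apply/matrixP => i j; rewrite !mxE. Qed.

Lemma compress_Pop k : compress (Pop (kpath k).1) = delta_mx k k.
Proof.
apply/matrixP => i j; rewrite !mxE /Pop xi_kpath.
case: (ord2P i) => ->; case: (ord2P j) => ->; case: (ord2P k) => -> //=;
  by rewrite ?eqxx ?(negbTE x12) 1?eq_sym ?(negbTE x12).
Qed.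

Lemma compress_Lop : compress (Lop r s e0) = delta_mx ord_max ord0.
Proof.
apply/matrixP => i j; rewrite !mxE /Lop kpath_valid.
case: (ord2P i) => ->; case: (ord2P j) => -> //=;
  by rewrite eqxx se0 -[(x1, [::])]/(kpath ord0) xi_kpath.
Qed.

Lemma compress_onto M : AlgN (delta_mx ord_max ord0) M ->
  exists A, tensor_alg r s A /\ compress A = M.
Proof.
move=> [c Mc]; have := congr1 (fun X : 'cV_2 => X ord0 ord0) Mc.
rewrite -colE !mxE /= mulr0 => M01.
exists (opadd (opscale (M ord0 ord0) (Pop x1))
          (opadd (opscale (M ord_max ord_max) (Pop x2)) (opscale (M ord_max ord0) (Lop r s e0)))).
split; first by apply: alg0_tensor_alg; do !constructor.
rewrite !compress_add !compress_scale (compress_Pop ord0) (compress_Pop ord_max) compress_Lop.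
apply/matrixP => i j; rewrite !mxE.
by case: (ord2P i) => ->; case: (ord2P j) => -> //=; rewrite ?M01; ring.
Qed.

Lemma compress_char_at k : char_at r s (kpath k).1 (rho_pi compress (delta_mx k ord0)).
Proof.
have rhoE A : rho_pi compress (delta_mx k ord0) A = compress A k k by apply: rho_pi_delta.
split; last by rewrite rhoE compress_Pop mxE !eqxx.
split=> [A B _ _|c A _|A B A_tensor B_tensor|]; rewrite ?rhoE.
- by rewrite compress_add mxE.
- by rewrite compress_scale mxE.
- exact: compress_diag_mul.
- exists (Pop (kpath k).1); split; first exact: tensor_alg_Pop.
  by rewrite rhoE compress_Pop mxE !eqxx oner_neq0.
Qed.

Lemma compress_in_rep :
  in_rep r s x1 x2 compress (delta_mx ord0 ord0) (delta_mx ord_max ord0).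
Proof.
split; rewrite /unit_vec ?inner_delta //.
split; [|exact: (compress_char_at ord0)|exact: (compress_char_at ord_max)].
split=> [A B _ _|c A _|]; rewrite ?compress_add ?compress_scale //.
split; [exact: compress_mul|exact: compress_continuous|exact: compress_AlgN|exact: compress_onto].
Qed.

End Compression.

Section NestRepresentation.
Variables (R : realType) (V E : countType) (r s : E -> V) (x1 x2 : V).
Variables (pi : Op R V E -> 'M[R[i]]_2) (h1 h2 : 'cV[R[i]]_2).
Hypotheses (x12 : x1 != x2) (pi_rep : in_rep r s x1 x2 pi h1 h2).
Implicit Types (A B : Op R V E).

Let H := cols_mx h1 h2.

Local Hint Resolve tensor_alg_Pop : core.

Definition conj_rep A := adjmx H *m pi A *m H.

Local Notation S := conj_rep.

Lemma adjmx_H : adjmx H *m H = 1%:M.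
Proof. by case: pi_rep => u1 u2 o12 _; apply: adjmx_cols_mx. Qed.

Lemma conj_rep_mul A B : tensor_alg r s A -> tensor_alg r s B -> S (opcomp A B) = S A *m S B.
Proof.
case: pi_rep => _ _ _ [[_ _ [pi_mul _ _ _]] _ _] A_tensor B_tensor.
by rewrite /conj_rep pi_mul // !mulmxA -(mulmxA _ H) (mulmx1C adjmx_H) mulmx1.
Qed.

Lemma conj_rep_scale c A : tensor_alg r s A -> S (opscale c A) = c *: S A.
Proof.
case: pi_rep => _ _ _ [[_ pi_scale _] _ _] A_tensor.
by rewrite /conj_rep pi_scale // -scalemxAr -scalemxAl.
Qed.

Lemma conj_rep_add A B : tensor_alg r s A -> tensor_alg r s B -> S (opadd A B) = S A + S B.
Proof.
case: pi_rep => _ _ _ [[pi_add _ _] _ _] A_tensor B_tensor.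
by rewrite /conj_rep pi_add // mulmxDr mulmxDl.
Qed.

Lemma conj_rep_op0 : S op0 = 0.
Proof.
by rewrite -(opscale0 (Pop x1)) conj_rep_scale ?scale0r.
Qed.

Lemma conj_rep_01 A : tensor_alg r s A -> S A ord0 ord_max = 0.
Proof.
case: pi_rep => _ _ o12 [[_ _ [_ _ pi_AlgN _]] _ _] A_tensor.
rewrite /conj_rep adjmx_mulE col_cols_mx0 col_cols_mx1.
by have [c ->] := pi_AlgN A A_tensor; rewrite inner_scalel inner_conj o12 conjc0 mulr0.
Qed.

Lemma conj_rep_00 A : S A ord0 ord0 = rho_pi pi h1 A.
Proof. by rewrite /conj_rep adjmx_mulE col_cols_mx0. Qed.

Lemma conj_rep_11 A : S A ord_max ord_max = rho_pi pi h2 A.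
Proof. by rewrite /conj_rep adjmx_mulE col_cols_mx1. Qed.

Lemma conj_rep_onto : exists2 A, tensor_alg r s A & S A = delta_mx ord_max ord0.
Proof.
case: pi_rep => _ _ _ [[_ _ [_ _ _ pi_onto]] _ _].
have h2E : h2 = H *m delta_mx ord_max ord0 by rewrite -colE col_cols_mx1.
have [|A [A_tensor piA]] := pi_onto (H *m delta_mx ord_max ord0 *m adjmx H).
  exists 0; rewrite scale0r h2E -!mulmxA (mulmxA (adjmx H)) adjmx_H mul1mx.
  by rewrite mul_delta_mx_cond /= mulr0n mulmx0.
by exists A; rewrite // /conj_rep piA !mulmxA adjmx_H mul1mx -mulmxA adjmx_H mulmx1.
Qed.


Lemma conj_rep_Pop_sum : S (Pop x1) + S (Pop x2) = 1%:M.
Proof.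
case: pi_rep => _ _ _ [_ [_ rho1_x1] [_ rho2_x2]].
apply: lower_mx2_complement; rewrite ?conj_rep_01 ?conj_rep_00 ?conj_rep_11 //.
- by rewrite -conj_rep_mul ?opcomp_Pop_neq ?conj_rep_op0.
- by rewrite -conj_rep_mul ?opcomp_Pop_neq 1?eq_sym ?conj_rep_op0.
Qed.

Lemma conj_rep_corner B : alg0 r s B ->
  S (Pop x2) *m S B *m S (Pop x1) = S (opcomp (opcomp (Pop x2) B) (Pop x1)).
Proof.
move=> B_alg0; have P2B : alg0 r s (opcomp (Pop x2) B) by apply: alg0_comp => //; apply: alg0_P.
rewrite (conj_rep_mul (alg0_tensor_alg P2B)) //.
by rewrite (conj_rep_mul _ (alg0_tensor_alg B_alg0)).
Qed.

Lemma conj_rep_sandwich (K1 K2 : 'M[R[i]]_2) A :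
  K1 *m S A *m K2 = K1 *m adjmx H *m pi A *m (H *m K2).
Proof. by rewrite /conj_rep !mulmxA. Qed.

Lemma conj_rep_corner_alg0 B : ~ (exists e, s e = x1 /\ r e = x2) -> alg0 r s B ->
  S (Pop x2) *m S B *m S (Pop x1) = 0.
Proof.
move=> no_edge B_alg0; elim: B_alg0 => {B} [e|v|A B A0 IHA B0 IHB|c A A0 IHA|A B A0 IHA B0 IHB].
- rewrite conj_rep_corner; last exact: alg0_L.
  by rewrite corner_Lop ?conj_rep_op0 // => e_edge; apply: no_edge; exists e.
- by rewrite conj_rep_corner ?corner_Pop ?conj_rep_op0 //; apply: alg0_P.
- rewrite (conj_rep_add (alg0_tensor_alg A0) (alg0_tensor_alg B0)).
  by rewrite mulmxDr mulmxDl IHA IHB addr0.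
- by rewrite (conj_rep_scale _ (alg0_tensor_alg A0)) -scalemxAr -scalemxAl IHA scaler0.
- rewrite (conj_rep_mul (alg0_tensor_alg A0) (alg0_tensor_alg B0)).
  exact: corner_mul_eq0 conj_rep_Pop_sum IHA IHB.
Qed.

Lemma in_rep_edge : exists e, s e = x1 /\ r e = x2.
Proof.
apply: contrapT => no_edge.
have pi_cont : rep_continuous r s pi by case: pi_rep => _ _ _ [[_ _ [_ ? _ _]] _ _].
have corner_eq0 A : tensor_alg r s A -> S (Pop x2) *m S A *m S (Pop x1) = 0.
  move=> A_tensor; rewrite conj_rep_sandwich.
  apply: rep_continuous_sandwich_eq0 A_tensor => // B B_alg0.
  by rewrite -conj_rep_sandwich conj_rep_corner_alg0.
have [A A_tensor SA] := conj_rep_onto.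
case: pi_rep => _ _ _ [_ [_ rho1_x1] [_ rho2_x2]].
have := corner_eq0 A A_tensor; rewrite SA; apply/eqP/mul_delta10_neq0.
- by rewrite conj_rep_11.
- by rewrite conj_rep_00.
Qed.

End NestRepresentation.

Theorem theorem2p6 (R : realType) (V E : countType) (r s : E -> V) (x1 x2 : V) :
  x1 != x2 ->
  (forall (pi : Op R V E -> 'M[R[i]]_2) (h1 h2 : 'cV[R[i]]_2),
      in_rep r s x1 x2 pi h1 h2 -> exists e : E, s e = x1 /\ r e = x2) /\
  ((exists (pi : Op R V E -> 'M[R[i]]_2) (h1 h2 : 'cV[R[i]]_2),
      in_rep r s x1 x2 pi h1 h2) <-> exists e : E, s e = x1 /\ r e = x2).
Proof.
move=> x12; split=> [pi h1 h2|]; first exact: in_rep_edge.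
split=> [[pi [h1 [h2 pi_rep]]]|[e0 [se0 re0]]]; first exact: in_rep_edge pi_rep.
exists (compress x1 x2 e0), (delta_mx ord0 ord0), (delta_mx ord_max ord0).
exact: compress_in_rep.
Qed.
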